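(* Let $m\ge 2$ and let $a_1,a_2,b_1,\dots,b_m,c_1,\dots,c_m$ be real numbers with $a_1\ne a_2$, $b_1>b_2>\dots>b_m$, $c_1>c_2>\dots>c_m$, and $a_1+(m-1)a_2=\sum_{i=1}^m(b_i+c_i)$. Let ${\bf B}$ be the $m\times m$ matrix with $B_{ij}=b_i+c_{m+1-i}-a_2$ for $i<j$, $B_{ii}=b_i$, $B_{ij}=0$ for $i>j$; for each $i$ let ${\bf v}_i$ be the eigenvector of ${\bf B}$ with eigenvalue $b_i$ whose $i$-th coordinate is $1$ and whose later coordinates vanish. Assume $b_i+c_k-a_2\ne0$ for all $i,k$ and let $\langle\cdot,\cdot\rangle$ be the real symmetric bilinear form with $\langle{\bf v}_i,{\bf v}_j\rangle=0$ for $i\ne j$ and $$\langle{\bf v}_i,{\bf v}_i\rangle=\frac{\prod_{k=i+1}^m(b_i-b_k)}{\prod_{k=1}^{i-1}(b_i-b_k)}\cdot\frac{\prod_{k=m+2-i}^m(b_i+c_k-a_2)}{\prod_{k=1}^{m+1-i}(b_i+c_k-a_2)}.$$ Then this form is sign-definite (positive- or negative-definite) if and only if one of the following two systems of inequalities holds: (I) $b_{m+1-i}+c_i>a_2>b_{m+1-i}+c_{i+1}$ for $i=1,\dots,m-1$, and $b_1+c_m>a_2$; (II) $b_i+c_{m-i}>a_2>b_i+c_{m+1-i}$ for $i=1,\dots,m-1$, and $a_2>b_m+c_1$. Moreover, if $\epsilon\langle\cdot,\cdot\rangle$ is positive-definite for $\epsilon=\pm1$, then $\epsilon=\mathrm{sign}(a_1-a_2)$;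 if (I) holds then $a_1>a_2$, and if (II) holds then $a_1<a_2$.
   Context: Empty products equal $1$. *)

From HB Require Import structures.
From mathcomp Require Import all_boot all_order all_algebra.
Set Implicit Arguments. Unset Strict Implicit. Unset Printing Implicit Defensive.
Import Order.TTheory GRing.Theory Num.Theory.
Local Open Scope ring_scope.

(* Sequences b, c are 1-indexed functions nat -> R (only indices 1..m matter).
   Matrix rows/columns are 'I_m, the 0-based ordinal i standing for index i+1. *)

Definition Bmat (R : ringType) (m : nat) (a2 : R) (b c : nat -> R) : 'M[R]_m :=
  \matrix_(i < m, j < m)
     if (i < j)%N then b i.+1 + c (m - i)%N - a2
     else if i == j then b i.+1 else 0.

Definition dval (R : fieldType) (m : nat) (a2 : R) (b c : nat -> R) (i : nat) : R :=
  (\prod_(i.+1 <= k < m.+1) (b i - b k)) / (\prod_(1 <= k < i) (b i - b k)) *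
  ((\prod_((m.+2 - i)%N <= k < m.+1) (b i + c k - a2)) /
   (\prod_(1 <= k < (m.+2 - i)%N) (b i + c k - a2))).

Definition bform (R : ringType) (m : nat) (G : 'M[R]_m) (x y : 'cV[R]_m) : R :=
  (x^T *m G *m y) 0 0.

Definition posdef (R : numDomainType) (m : nat) (G : 'M[R]_m) : Prop :=
  forall x : 'cV[R]_m, x != 0 -> 0 < bform G x x.

Definition systemI (R : numDomainType) (m : nat) (a2 : R) (b c : nat -> R) : Prop :=
  (forall i, (1 <= i < m)%N ->
     a2 < b (m.+1 - i)%N + c i /\ b (m.+1 - i)%N + c i.+1 < a2)
  /\ a2 < b 1%N + c m.

Definition systemII (R : numDomainType) (m : nat) (a2 : R) (b c : nat -> R) : Prop :=
  (forall i, (1 <= i < m)%N ->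
     a2 < b i + c (m - i)%N /\ b i + c (m.+1 - i)%N < a2)
  /\ b m + c 1%N < a2.

(* The v_i are the columns of a unitriangular, hence invertible, matrix V
   with V^T G V = diag(d_1, ..., d_m), so the form is definite iff all d_i
   have one sign.  The factor b_i - b_k of d_i is negative exactly for k < i,
   and the c-part of d_i has the sign of prod_k (b_i + c_k - a2), so
   sign(d_i) = (-1)^(i-1+N_i) with N_i (nbelow i) the number of k such that
   b_i + c_k < a2.  N_i is nondecreasing and at most m; a constant parity of
   i-1+N_i therefore forces N to increase strictly, i.e. N_i = i-1 (all
   d_i > 0) or N_i = i (all d_i < 0).  As c is decreasing, N_i = n says that
   b_i + c_k - a2 changes sign between k = m-n and k = m+1-n, and these
   conditions for all i are exactly (I), resp. (II).  Finally
   a1 - a2 = sum_j (b_(m+1-j) + c_j - a2), whose terms are positive under (I)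
   and, after reversing c instead of b, negative under (II). *)

From HB Require Import structures.
From mathcomp Require Import all_boot all_order all_algebra.
From mathcomp Require Import zify ring lra.
Set Implicit Arguments.
Unset Strict Implicit.
Unset Printing Implicit Defensive.
Import Order.TTheory GRing.Theory Num.Theory.

Lemma count_iota_upclosed (q : pred nat) a n :
  (forall k k', (a <= k <= k')%N -> (k' < a + n)%N -> q k -> q k') ->
  forall k, (a <= k < a + n)%N -> q k = (a + n <= k + count q (iota a n))%N.
Proof.
elim: n a => [|n IHn] a q_up k k_in; first lia.
have := count_size q (iota a.+1 n); rewrite size_iota /= => count_le.
case qa: (q a).
  have -> : count q (iota a.+1 n) = n.
    apply/eqP; rewrite -[n in _ == n](size_iota a.+1) -all_count.
    by apply/allP => j; rewrite mem_iota => j_in; apply: (q_up a) => //; lia.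
  by rewrite (q_up a k) //; lia.
have [a_lt_k | k_le_a] := ltnP a k.
  rewrite (IHn a.+1) ?addSnnS //; last lia.
  by move=> k1 k2 k12 k2n; apply: q_up; lia.
have -> : k = a by lia.
by rewrite qa; lia.
Qed.

Lemma nondecr_parity_pinned (f : nat -> nat) m (e : bool) :
  (forall i, (1 <= i < m)%N -> f i <= f i.+1)%N -> (f m <= m)%N ->
  (forall i, (1 <= i <= m)%N -> odd (i.-1 + f i) = e) ->
  forall i, (1 <= i <= m)%N -> f i = (i.-1 + e)%N.
Proof.
move=> f_homo fm_le f_odd.
have f_incr i : (1 <= i < m)%N -> (f i < f i.+1)%N.
  by move=> i_in; have := f_homo i i_in; have := f_odd i; have := f_odd i.+1; lia.
have f_gap i d : (1 <= i)%N -> (i + d <= m)%N -> (f i + d <= f (i + d))%N.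
  move=> i_ge1; elim: d => [|d IHd] id_le; first by rewrite !addn0.
  by have := f_incr (i + d)%N; rewrite addnS in id_le *; lia.
move=> i i_in.
have f_ge : (i.-1 <= f i)%N by have := f_gap 1%N i.-1; rewrite add1n prednK; lia.
have f_le : (f i <= i)%N by have := f_gap i (m - i)%N; rewrite subnKC; lia.
by have := f_odd i i_in; lia.
Qed.

Lemma forall_ordS m (P : nat -> Prop) :
  (forall i : 'I_m, P i.+1) <-> (forall i, (1 <= i <= m)%N -> P i).
Proof.
split=> [P_ord [//|i] i_in | P_nat i]; last by apply: P_nat; rewrite ltn_ord.
have i_lt_m : (i < m)%N by lia.
exact: (P_ord (Ordinal i_lt_m)).
Qed.

Local Open Scope ring_scope.

Lemma bformN (R : nzRingType) m (G : 'M[R]_m) x y : bform (- G) x y = - bform G x y.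
Proof. by rewrite /bform mulmxN mulNmx mxE. Qed.

Lemma bform_congr (R : comNzRingType) m (V G : 'M[R]_m) x y :
  bform (V^T *m G *m V) x y = bform G (V *m x) (V *m y).
Proof. by rewrite /bform trmx_mul !mulmxA. Qed.

Lemma posdef_congr (R : numDomainType) m (V G : 'M[R]_m) :
  V \in unitmx -> posdef (V^T *m G *m V) <-> posdef G.
Proof.
move=> V_unit; split=> G_pos x x_neq0.
  rewrite -(mulKVmx V_unit x) -bform_congr; apply: G_pos.
  by apply: contraNneq x_neq0 => x0; rewrite -(mulKVmx V_unit x) x0 mulmx0.
rewrite bform_congr; apply: G_pos.
by apply: contraNneq x_neq0 => Vx0; rewrite -(mulKmx V_unit x) Vx0 mulmx0.
Qed.

Lemma bform_diag (R : comNzRingType) m (d : 'rV[R]_m) x :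
  bform (diag_mx d) x x = \sum_i d 0 i * x i 0 ^+ 2.
Proof.
rewrite /bform mul_mx_diag mxE; apply: eq_bigr => i _.
by rewrite !mxE mulrAC -expr2 mulrC.
Qed.

Lemma posdef_diag_mx (R : realDomainType) m (d : 'rV[R]_m) :
  posdef (diag_mx d) <-> forall i, 0 < d 0 i.
Proof.
split=> [d_pos i | d_pos x].
  have delta_neq0 : delta_mx i 0 != 0 :> 'cV[R]_m.
    by apply/eqP => /matrixP/(_ i 0)/eqP; rewrite !mxE !eqxx oner_eq0.
  have := d_pos _ delta_neq0; rewrite bform_diag (bigD1 i) //= big1.
    by rewrite !mxE !eqxx expr1n mulr1 addr0.
  by move=> j /negbTE ji; rewrite !mxE ji expr0n mulr0.
move=> /matrix0Pn[i [k]]; rewrite (ord1 k) => xi_neq0.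
have term_ge0 j : true -> 0 <= d 0 j * x j 0 ^+ 2.
  by move=> _; apply: mulr_ge0; [exact: ltW | exact: sqr_ge0].
rewrite bform_diag lt_def sumr_ge0 // andbT psumr_neq0 //.
apply/hasP; exists i; rewrite ?mem_index_enum //=.
by rewrite mulr_gt0 ?d_pos // lt_def sqrf_eq0 xi_neq0 sqr_ge0.
Qed.

Lemma bform_delta (R : nzRingType) m (M : 'M[R]_m) i j :
  bform M (delta_mx i 0) (delta_mx j 0) = M i j.
Proof. by rewrite /bform trmx_delta -rowE -colE !mxE. Qed.

Lemma unitmx_trig1 (R : comUnitRingType) m (A : 'M[R]_m) :
  is_trig_mx A -> (forall i, A i i = 1) -> A \in unitmx.
Proof. by move=> A_trig A_diag; rewrite unitmxE det_trig // big1 ?unitr1. Qed.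

Lemma posdef_orthogonal_basis (R : realDomainType) m (v : 'I_m -> 'cV[R]_m)
    (G : 'M[R]_m) (d : 'I_m -> R) :
  (forall i : 'I_m, v i i 0 = 1) ->
  (forall i k : 'I_m, (i < k)%N -> v i k 0 = 0) ->
  (forall i j : 'I_m, i != j -> bform G (v i) (v j) = 0) ->
  (forall i : 'I_m, bform G (v i) (v i) = d i) ->
  posdef G <-> forall i, 0 < d i.
Proof.
move=> v_diag v_trig v_orth v_norm.
pose V : 'M[R]_m := \matrix_(k, i) v i k 0.
have V_unit : V \in unitmx.
  rewrite -unitmx_tr; apply: unitmx_trig1 => [|i]; last by rewrite !mxE v_diag.
  by apply/is_trig_mxP => i j ij; rewrite !mxE v_trig.
have V_col i : V *m delta_mx i 0 = v i.
  by apply/matrixP => k l; rewrite -colE !mxE (ord1 l).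
have gram : V^T *m G *m V = diag_mx (\row_i d i).
  apply/matrixP => i j; rewrite -bform_delta bform_congr !V_col !mxE.
  by case: eqP => [-> | /eqP ij]; rewrite ?v_norm ?v_orth.
rewrite -(posdef_congr G V_unit) gram posdef_diag_mx.
by split=> d_pos i; have := d_pos i; rewrite mxE.
Qed.

Lemma nat_decr_lt (R : numDomainType) (u : nat -> R) m :
  (forall i, (1 <= i < m)%N -> u i.+1 < u i) ->
  forall i j, (1 <= i)%N -> (i < j <= m)%N -> u j < u i.
Proof.
move=> u_decr i j i_ge1 /andP[ij jm].
pose D := [pred k | 1 <= k <= m]%N.
have iD : i \in D by rewrite inE; lia.
have jD : j \in D by rewrite inE; lia.
apply: (@homo_ltn_in R D u (fun x y => y < x)) iD jD ij.
- by move=> y x z yx zy; apply: lt_trans zy yx.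
- by move=> k l k_in l_in n; rewrite !inE in k_in l_in *; lia.
- by move=> k; rewrite !inE => k_in k1_in; apply: u_decr; lia.
Qed.

Lemma sgr_prod_count (R : realDomainType) (I : Type) (s : seq I) (F : I -> R) :
  all (fun i => F i != 0) s ->
  Num.sg (\prod_(i <- s) F i) = (-1) ^+ count (fun i => F i < 0) s.
Proof.
elim: s => [|x s IHs] /=; first by rewrite big_nil sgr1.
by case/andP=> Fx_neq0 /IHs; rewrite big_cons sgrM exprD neqr0_sign // => ->.
Qed.

Lemma sumr_nat_gt0 (R : numDomainType) (F : nat -> R) m n : (m < n)%N ->
  (forall i, (m <= i < n)%N -> 0 < F i) -> 0 < \sum_(m <= i < n) F i.
Proof.
move=> mn F_gt0; rewrite big_ltn //; apply: ltr_wpDr; last by apply: F_gt0; lia.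
rewrite big_seq sumr_ge0 // => i; rewrite mem_index_iota => i_in.
by apply/ltW/F_gt0; lia.
Qed.

Section SignPattern.

Variables (R : realFieldType) (m : nat) (a2 : R) (b c : nat -> R).
Hypothesis b_decr : forall i, (1 <= i < m)%N -> b i.+1 < b i.
Hypothesis c_decr : forall i, (1 <= i < m)%N -> c i.+1 < c i.
Hypothesis bc_neq0 : forall i k, (1 <= i <= m)%N -> (1 <= k <= m)%N -> b i + c k - a2 != 0.

Definition nbelow i := count (fun k => b i + c k - a2 < 0) (iota 1 m).

Lemma nbelowE i k : (1 <= k <= m)%N -> (b i + c k - a2 < 0) = (m < k + nbelow i)%N.
Proof.
move=> k_in; rewrite [LHS](@count_iota_upclosed (fun k => b i + c k - a2 < 0) 1 m) //.
move=> k1 k2 /andP[k1_ge1 k12] k2_lt /=.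
have : c k2 <= c k1.
  case: (ltngtP k1 k2) => [lt12 | | -> //]; last lia.
  by apply/ltW/(nat_decr_lt c_decr); lia.
lra.
Qed.

Lemma nbelow_homo i : (1 <= i < m)%N -> (nbelow i <= nbelow i.+1)%N.
Proof. by move=> i_in; apply: sub_count => k /=; have := b_decr i_in; lra. Qed.

Lemma nbelow_le i : (nbelow i <= m)%N.
Proof. by rewrite -[m in (_ <= m)%N](size_iota 1) count_size. Qed.

Lemma sg_dval i : (1 <= i <= m)%N ->
  Num.sg (dval m a2 b c i) = (-1) ^+ (i.-1 + nbelow i).
Proof.
move=> i_in.
have sg_later : Num.sg (\prod_(i.+1 <= k < m.+1) (b i - b k)) = 1.
  rewrite gtr0_sg // big_seq prodr_gt0 // => k; rewrite mem_index_iota subr_gt0 => k_in.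
  by apply: (nat_decr_lt b_decr); lia.
have sg_earlier : Num.sg (\prod_(1 <= k < i) (b i - b k)) = (-1) ^+ i.-1.
  have /allP earlier_lt0 : all (fun k => b i - b k < 0) (index_iota 1 i).
    apply/allP => k; rewrite mem_index_iota subr_lt0 => k_in.
    by apply: (nat_decr_lt b_decr); lia.
  rewrite sgr_prod_count; last by apply/allP => k /earlier_lt0; rewrite lt_neqAle => /andP[].
  by move/allP: earlier_lt0; rewrite all_count size_iota subn1 => /eqP->.
rewrite /dval !sgrM !sgrV sg_later sg_earlier mul1r exprD; congr (_ * _).
rewrite mulrC -sgrM -big_cat_nat; [|lia|lia].
rewrite sgr_prod_count; first by rewrite /index_iota subn1.
by apply/allP => k; rewrite mem_index_iota => k_in; apply: bc_neq0; lia.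
Qed.

Lemma dval_gt0E i : (1 <= i <= m)%N ->
  (0 < dval m a2 b c i) = ~~ odd (i.-1 + nbelow i).
Proof. by move=> i_in; rewrite -sgr_gt0 sg_dval // -signr_odd signr_gt0. Qed.

Lemma dval_lt0E i : (1 <= i <= m)%N ->
  (dval m a2 b c i < 0) = odd (i.-1 + nbelow i).
Proof. by move=> i_in; rewrite -sgr_lt0 sg_dval // -signr_odd signr_lt0. Qed.

Lemma all_dval_gt0 :
  (forall i, (1 <= i <= m)%N -> 0 < dval m a2 b c i) <->
  (forall i, (1 <= i <= m)%N -> nbelow i = i.-1).
Proof.
split=> [dval_gt0 i i_in | nbelow_pred i i_in].
  rewrite (nondecr_parity_pinned (e := false) nbelow_homo (nbelow_le m) _ i_in) ?addn0 //.
  by move=> j j_in; apply/negbTE; rewrite -dval_gt0E ?dval_gt0.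
by rewrite dval_gt0E // nbelow_pred // addnn odd_double.
Qed.

Lemma all_dval_lt0 :
  (forall i, (1 <= i <= m)%N -> dval m a2 b c i < 0) <->
  (forall i, (1 <= i <= m)%N -> nbelow i = i).
Proof.
split=> [dval_lt0 i i_in | nbelow_id i i_in].
  rewrite (nondecr_parity_pinned (e := true) nbelow_homo (nbelow_le m) _ i_in); first lia.
  by move=> j j_in; rewrite -dval_lt0E ?dval_lt0.
by rewrite dval_lt0E // nbelow_id //; lia.
Qed.


Lemma nbelow_eq i n : (1 <= i <= m)%N -> (n <= m)%N ->
  nbelow i = n <->
  ((n < m)%N -> 0 < b i + c (m - n)%N - a2) /\ ((0 < n)%N -> b i + c (m.+1 - n)%N - a2 < 0).
Proof.
move=> i_in n_le; split=> [<- | [above below]].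
  have N_le := nbelow_le i.
  split=> [lt_m | gt0]; last by rewrite nbelowE; lia.
  by rewrite lt_def bc_neq0 //=; [rewrite leNgt nbelowE; lia | lia].
have nbelow_le_n : (nbelow i <= n)%N.
  have [lt_m | m_le] := ltnP n m; last exact: leq_trans (nbelow_le i) m_le.
  by have := lt_gtF (above lt_m); rewrite nbelowE; lia.
have n_le_nbelow : (n <= nbelow i)%N.
  have [-> // | n_gt0] := posnP n.
  by have := below n_gt0; rewrite nbelowE; lia.
by apply/eqP; rewrite eqn_leq nbelow_le_n n_le_nbelow.
Qed.

Lemma systemI_nbelow : (0 < m)%N ->
  systemI m a2 b c <-> (forall i, (1 <= i <= m)%N -> nbelow i = i.-1).
Proof.
move=> m_gt0; split=> [[sysI sysI_last] i i_in | nbelow_pred].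
  apply/nbelow_eq; [done | lia | rewrite subr_gt0 subr_lt0].
  have [-> | i_neq1] := eqVneq i 1%N; first by rewrite subn0.
  have j_in : (1 <= m.+1 - i < m)%N by lia.
  have [] := sysI _ j_in; rewrite subKn; last lia.
  have -> : (m - i.-1 = m.+1 - i)%N by lia.
  by have -> : (m.+1 - i.-1 = (m.+1 - i).+1)%N by lia.
split=> [j j_in | ].
  have i_in : (1 <= m.+1 - j <= m)%N by lia.
  have [] := (nbelow_eq i_in (leq_trans (leq_pred _) (andP i_in).2)).1 (nbelow_pred _ i_in).
  have -> : (m - (m.+1 - j).-1 = j)%N by lia.
  have -> : (m.+1 - (m.+1 - j).-1 = j.+1)%N by lia.
  move=> above below.
  by split; [rewrite -subr_gt0; apply: above | rewrite -subr_lt0; apply: below]; lia.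
have one_in : (1 <= 1 <= m)%N by lia.
have [+ _] := (nbelow_eq one_in (leq0n m)).1 (nbelow_pred _ one_in).
by rewrite subn0 subr_gt0; apply; lia.
Qed.

Lemma systemII_nbelow : (0 < m)%N ->
  systemII m a2 b c <-> (forall i, (1 <= i <= m)%N -> nbelow i = i).
Proof.
move=> m_gt0; split=> [[sysII sysII_last] i i_in | nbelow_id].
  apply/nbelow_eq; [done | lia | rewrite subr_gt0 subr_lt0].
  have [i_lt_m | i_ge_m] := ltnP i m; first by have [] := sysII i ltac:(lia).
  have -> : i = m by lia.
  by rewrite subSnn.
split=> [i i_in | ].
  have i_in' : (1 <= i <= m)%N by lia.
  have [] := (nbelow_eq i_in' (andP i_in').2).1 (nbelow_id _ i_in').
  move=> above below.
  by split; [rewrite -subr_gt0; apply: above | rewrite -subr_lt0; apply: below]; lia.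
have m_in : (1 <= m <= m)%N by lia.
have [_ +] := (nbelow_eq m_in (leqnn m)).1 (nbelow_id _ m_in).
by rewrite subSnn subr_lt0; apply.
Qed.

End SignPattern.


Lemma sub_a1_a2 (R : numFieldType) m (a1 a2 : R) (b c : nat -> R) : (0 < m)%N ->
  a1 + (m - 1)%:R * a2 = \sum_(1 <= i < m.+1) (b i + c i) ->
  a1 - a2 = \sum_(1 <= j < m.+1) (b (m.+1 - j)%N + c j - a2).
Proof.
move=> m_gt0 a_sum.
have rev_sum :
    \sum_(1 <= j < m.+1) (b (m.+1 - j)%N + c j) = \sum_(1 <= i < m.+1) (b i + c i).
  rewrite !big_split /=; congr (_ + _).
  by rewrite [RHS]big_nat_rev; apply: eq_bigr => j _; rewrite add1n subSS.
rewrite sumrB rev_sum -a_sum sumr_const_nat subSS subn0 natrB // -mulr_natl.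
ring.
Qed.

Lemma systemI_a2_lt_a1 (R : realFieldType) m (a1 a2 : R) (b c : nat -> R) :
  (0 < m)%N -> a1 + (m - 1)%:R * a2 = \sum_(1 <= i < m.+1) (b i + c i) ->
  systemI m a2 b c -> a2 < a1.
Proof.
move=> m_gt0 a_sum [sysI sysI_last].
rewrite -subr_gt0 (sub_a1_a2 m_gt0 a_sum) sumr_nat_gt0 // => j j_in.
rewrite subr_gt0; have [j_lt_m | j_ge_m] := ltnP j m; first by have [] := sysI j ltac:(lia).
have -> : j = m by lia.
by rewrite subSnn.
Qed.

Lemma systemII_a1_lt_a2 (R : realFieldType) m (a1 a2 : R) (b c : nat -> R) :
  (0 < m)%N -> a1 + (m - 1)%:R * a2 = \sum_(1 <= i < m.+1) (b i + c i) ->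
  systemII m a2 b c -> a1 < a2.
Proof.
move=> m_gt0 a_sum [sysII sysII_last].
have a_sum' : a1 + (m - 1)%:R * a2 = \sum_(1 <= i < m.+1) (c i + b i).
  by rewrite a_sum; apply: eq_bigr => i _; rewrite addrC.
rewrite -subr_lt0 (sub_a1_a2 m_gt0 a_sum') -oppr_gt0 -sumrN sumr_nat_gt0 // => j j_in.
rewrite oppr_gt0 subr_lt0 addrC.
have [j_lt_m | j_ge_m] := ltnP j m; first by have [] := sysII j ltac:(lia).
have -> : j = m by lia.
by rewrite subSnn.
Qed.

Theorem theorem2p7 (R : realFieldType) (m : nat) (a1 a2 : R) (b c : nat -> R)
  (v : 'I_m -> 'cV[R]_m) (G : 'M[R]_m) :
  (2 <= m)%N ->
  a1 != a2 ->
  (forall i, (1 <= i < m)%N -> b i.+1 < b i) ->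
  (forall i, (1 <= i < m)%N -> c i.+1 < c i) ->
  a1 + (m - 1)%:R * a2 = \sum_(1 <= i < m.+1) (b i + c i) ->
  (* v i is the eigenvector of B for eigenvalue b_{i+1}, normalized *)
  (forall i : 'I_m, Bmat m a2 b c *m v i = b i.+1 *: v i) ->
  (forall i : 'I_m, v i i 0 = 1) ->
  (forall (i k : 'I_m), (i < k)%N -> v i k 0 = 0) ->
  (forall i k, (1 <= i <= m)%N -> (1 <= k <= m)%N -> b i + c k - a2 != 0) ->
  (* the real symmetric bilinear form with the prescribed values on the v_i *)
  G^T = G ->
  (forall (i j : 'I_m), i != j -> bform G (v i) (v j) = 0) ->
  (forall i : 'I_m, bform G (v i) (v i) = dval m a2 b c i.+1) ->
  ((posdef G \/ posdef (- G)) <-> (systemI m a2 b c \/ systemII m a2 b c))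
  /\ (forall eps : R, (eps = 1 \/ eps = -1) -> posdef (eps *: G) ->
        eps = Num.sg (a1 - a2))
  /\ (systemI m a2 b c -> a2 < a1)
  /\ (systemII m a2 b c -> a1 < a2).
Proof.
move=> m_ge2 _ b_decr c_decr a_sum _ v_diag v_trig bc_neq0 _ v_orth v_norm.
have m_gt0 : (0 < m)%N by apply: ltnW.
have posG : posdef G <-> systemI m a2 b c.
  rewrite (posdef_orthogonal_basis v_diag v_trig v_orth v_norm).
  rewrite (forall_ordS m (fun i => 0 < dval m a2 b c i)).
  by rewrite all_dval_gt0 // systemI_nbelow.
have vN_orth i j : i != j -> bform (- G) (v i) (v j) = 0.
  by move=> /v_orth; rewrite bformN => ->; rewrite oppr0.
have vN_norm i : bform (- G) (v i) (v i) = - dval m a2 b c i.+1.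
  by rewrite bformN v_norm.
have posNG : posdef (- G) <-> systemII m a2 b c.
  rewrite (posdef_orthogonal_basis v_diag v_trig vN_orth vN_norm).
  setoid_rewrite oppr_gt0; rewrite (forall_ordS m (fun i => dval m a2 b c i < 0)).
  by rewrite all_dval_lt0 // systemII_nbelow.
have a2_lt_a1 := systemI_a2_lt_a1 m_gt0 a_sum.
have a1_lt_a2 := systemII_a1_lt_a2 m_gt0 a_sum.
split; first by rewrite posG posNG.
split=> // eps [-> | ->]; [rewrite scale1r posG | rewrite scaleN1r posNG].
  by move/a2_lt_a1; rewrite -subr_gt0 => /gtr0_sg->.
by move/a1_lt_a2; rewrite -subr_lt0 => /ltr0_sg->.
Qed.
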